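(* Fix $x\in\mathbf{X}$. (i) Suppose $H_{TP}(x)\le\delta$, and define the OOD detectors by $\mathbf{P}'_k(x\in\mathbf{X}_k\mid D)=\mathbf{P}(x\in\mathbf{X}_k\mid D)$ for $k=1,\dots,T$. Then $H_{OOD,k}(x)\le\delta$ for all $k=1,\dots,T$. (ii) Suppose OOD detectors satisfy $H_{OOD,k}(x)\le\delta_k$ for $k=1,\dots,T$, and define task-id prediction probabilities by $\mathbf{P}(x\in\mathbf{X}_k\mid D)=\frac{\mathbf{P}'_k(x\in\mathbf{X}_k\mid D)}{\sum_{k'}\mathbf{P}'_{k'}(x\in\mathbf{X}_{k'}\mid D)}$. Then $H_{TP}(x)\le\big(\sum_k\mathbf{1}_{x\in\mathbf{X}_k}e^{\delta_k}\big)\big(\sum_k(1-e^{-\delta_k})\big)$, where $\mathbf{1}_{x\in\mathbf{X}_k}$ is the indicator of $x\in\mathbf{X}_k$.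
   Context: $\mathbf{X}$ is an input domain which is the disjoint union of task domains $\mathbf{X}_1,\dots,\mathbf{X}_T$. $D$ is a fixed conditioning event. A task-id prediction (TP) is a categorical distribution $\{\mathbf{P}(x\in\mathbf{X}_k\mid D)\}_{k=1}^T$ over the $T$ tasks (nonnegative, summing to $1$; in particular $1-\mathbf{P}(x\in\mathbf{X}_k\mid D)=\mathbf{P}(x\in\bigcup_{k'\neq k}\mathbf{X}_{k'}\mid D)$). For $x\in\mathbf{X}_{k_0}$, $H_{TP}(x)=-\log\mathbf{P}(x\in\mathbf{X}_{k_0}\mid D)$. An OOD detector for task $k$ is a Bernoulli distribution given by a value $\mathbf{P}'_k(x\in\mathbf{X}_k\mid D)\in[0,1]$, with $\mathbf{P}'_k(x\in\mathbf{X}\setminus\mathbf{X}_k\mid D)=1-\mathbf{P}'_k(x\in\mathbf{X}_k\mid D)$, and its cross-entropy is $H_{OOD,k}(x)=-\log\mathbf{P}'_k(x\in\mathbf{X}_k\mid D)$ if $x\in\mathbf{X}_k$ and $H_{OOD,k}(x)=-\log\mathbf{P}'_k(x\in\mathbf{X}\setminus\mathbf{X}_k\mid D)$ if $x\in\mathbf{X}\setminus\mathbf{X}_k$. *)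

From mathcomp Require Import all_boot all_order all_algebra.
From mathcomp Require Import all_classical all_reals all_analysis.
Set Implicit Arguments. Unset Strict Implicit. Unset Printing Implicit Defensive.
Import Order.TTheory GRing.Theory Num.Theory.
Local Open Scope ring_scope.

Definition neglog (R : realType) (p : R) : \bar R :=
  if p == 0 then +oo%E else (- ln p)%:E.

(* The input domain X is the disjoint union of X_1..X_T: encoded by the
   map [task : X -> 'I_T], with x \in X_k  iff  task x = k. *)

(* A task-id prediction (at the fixed x, conditioned on D):
   a categorical distribution over the T tasks. *)
Definition is_TP (R : realType) (T : nat) (p : 'I_T -> R) : Prop :=
  (forall k, 0 <= p k) /\ \sum_(k < T) p k = 1.

Definition H_TP (R : realType) (X : Type) (T : nat) (task : X -> 'I_T)
  (p : 'I_T -> R) (x : X) : \bar R := neglog (p (task x)).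

(* OOD detectors: q k = P'_k(x \in X_k | D) in [0,1]. *)
Definition is_OOD (R : realType) (T : nat) (q : 'I_T -> R) : Prop :=
  forall k, 0 <= q k <= 1.

Definition H_OOD (R : realType) (X : Type) (T : nat) (task : X -> 'I_T)
  (q : 'I_T -> R) (k : 'I_T) (x : X) : \bar R :=
  if task x == k then neglog (q k) else neglog (1 - q k).

(* A detector whose in-distribution probability is the task-id probability p
   errs on x only by putting mass p_k on a wrong task k, and p_k <= 1 - p_k0,
   so its cross-entropy never exceeds H_TP.  Conversely, bounded OOD entropies
   give q_k0 >= e^-d_k0 and q_k <= 1 - e^-d_k for k <> k0; then
   H_TP = ln (1 + A / q_k0) <= A / q_k0 <= e^d_k0 * A with
   A = sum_{k <> k0} q_k <= sum_{k <> k0} (1 - e^-d_k). *)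
From mathcomp Require Import all_boot all_order all_algebra.
From mathcomp Require Import all_classical all_reals all_analysis.
From mathcomp Require Import lra.
Set Implicit Arguments. Unset Strict Implicit.
Import Order.TTheory GRing.Theory Num.Theory.
Local Open Scope ring_scope.

Section CrossEntropyBounds.
Variable R : realType.

Lemma neglog_le (a d : R) : 0 <= a -> (neglog a <= d%:E)%E = (expR (- d) <= a).
Proof.
rewrite /neglog le0r => /orP[/eqP->|a_gt0]; first by rewrite eqxx leye_eq leNgt expR_gt0.
by rewrite gt_eqF // lee_fin -[a in RHS]lnK // ler_expR lerNl.
Qed.

Lemma neglog_div_addr_le (a b : R) :
  0 < a -> 0 <= b -> (neglog (a / (a + b)) <= (b / a)%:E)%E.
Proof.
move=> a_gt0 b_ge0; have ab_gt0 : 0 < a + b by lra.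
rewrite /neglog gt_eqF ?divr_gt0 // lee_fin -lnV ?posrE ?divr_gt0 // invf_div.
rewrite mulrDl divff ?gt_eqF //.
by apply: le_ln1Dx; have := divr_ge0 b_ge0 (ltW a_gt0); lra.
Qed.

Lemma is_TP_le_subr (T : nat) (p : 'I_T -> R) (j k : 'I_T) :
  is_TP p -> j != k -> p j <= 1 - p k.
Proof.
move=> [p_ge0 <-] jk; rewrite lerBrDr (bigD1 j) //= (bigD1 k) 1?eq_sym //= addrA lerDl.
by apply: sumr_ge0 => i _.
Qed.

Lemma sum_indicator_mull (T : nat) (k0 : 'I_T) (f : 'I_T -> R) :
  \sum_(k < T) (k0 == k)%:R * f k = f k0.
Proof.
rewrite (bigD1 k0) //= eqxx mul1r big1 ?addr0 // => k /negbTE.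
by rewrite eq_sym => ->; rewrite mul0r.
Qed.

Variables (X : Type) (T : nat) (task : X -> 'I_T) (x : X).

Lemma H_OOD_le_expRN (q : 'I_T -> R) (k : 'I_T) (d : R) :
  is_OOD q -> (H_OOD task q k x <= d%:E)%E ->
  expR (- d) <= if task x == k then q k else 1 - q k.
Proof.
move=> /(_ k)/andP[q_ge0 q_le1]; rewrite /H_OOD.
by case: eqP => _; rewrite neglog_le // subr_ge0.
Qed.

Lemma H_OOD_le_H_TP (p : 'I_T -> R) (d : R) (k : 'I_T) :
  is_TP p -> (H_TP task p x <= d%:E)%E -> (H_OOD task p k x <= d%:E)%E.
Proof.
move=> p_TP; have [p_ge0 _] := p_TP.
rewrite /H_TP /H_OOD; case: eqP => [<- //|/eqP k0k].
have p_le := is_TP_le_subr p_TP k0k.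
rewrite !neglog_le //; last exact: le_trans p_le.
by move=> d_le; apply: le_trans d_le p_le.
Qed.

Lemma H_TP_normalized_le (q delta : 'I_T -> R) :
  is_OOD q -> (forall k, (H_OOD task q k x <= (delta k)%:E)%E) ->
  (H_TP task (fun k => (q k / \sum_(k' < T) q k')%R) x <=
   ((\sum_(k < T) (task x == k)%:R * expR (delta k)) *
    (\sum_(k < T) (1 - expR (- delta k))))%R%:E)%E.
Proof.
move=> q_OOD H_le; set k0 := task x.
have q0_ge : expR (- delta k0) <= q k0.
  by have := H_OOD_le_expRN q_OOD (H_le k0); rewrite eqxx.
have q0_gt0 : 0 < q k0 := lt_le_trans (expR_gt0 _) q0_ge.
have q0_le1 : q k0 <= 1 by case/andP: (q_OOD k0).
have qk_le k : k != k0 -> q k <= 1 - expR (- delta k).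
  by move=> kk0; have := H_OOD_le_expRN q_OOD (H_le k); rewrite eq_sym (negbTE kk0); lra.
set A := \sum_(k < T | k != k0) q k.
set B := \sum_(k < T | k != k0) (1 - expR (- delta k)).
have A_ge0 : 0 <= A by apply: sumr_ge0 => k _; case/andP: (q_OOD k).
have A_le_B : A <= B by apply: ler_sum.
have inv_q0_le : (q k0)^-1 <= expR (delta k0).
  by rewrite -[expR _]invrK -expRN lef_pV2 ?posrE ?expR_gt0.
rewrite /H_TP -/k0 sum_indicator_mull (bigD1 k0) //= -/A (bigD1 k0) //= -/B.
apply: le_trans (neglog_div_addr_le q0_gt0 A_ge0) _; rewrite lee_fin.
have A_div_le : A / q k0 <= expR (delta k0) * A by rewrite mulrC; exact: ler_wpM2r.
apply: (le_trans A_div_le); apply: ler_wpM2l; [exact: ltW (expR_gt0 _) | lra].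
Qed.

End CrossEntropyBounds.

Theorem theorem2 (R : realType) (X : Type) (T : nat) (task : X -> 'I_T) (x : X) :
  (* (i) *)
  (forall (p : 'I_T -> R) (delta : R),
     is_TP p ->
     (H_TP task p x <= delta%:E)%E ->
     forall k : 'I_T, (H_OOD task p k x <= delta%:E)%E)
  /\
  (* (ii) *)
  (forall (q : 'I_T -> R) (delta : 'I_T -> R),
     is_OOD q ->
     (forall k : 'I_T, (H_OOD task q k x <= (delta k)%:E)%E) ->
     (H_TP task (fun k => (q k / \sum_(k' < T) q k')%R) x <=
       (((\sum_(k < T) (task x == k)%:R * expR (delta k)) *
        (\sum_(k < T) (1 - expR (- delta k))))%R)%:E)%E).
Proof.
split.
- by move=> p delta p_TP H_le k; exact: H_OOD_le_H_TP.
- exact: H_TP_normalized_le.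
Qed.
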